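(* Let $p>155$ be a prime, let $G$ be a cyclic group of order $p$, and let $S$ be an unsplittable minimal zero-sum sequence over $G$ of length $|S|=\frac{p-1}{2}$. Then there do not exist $g\in G$ and integers $r_1\ge r_2\ge r_3>0$ such that $S=g^{r_1}\big(\frac{p-1}{2}g\big)^{r_2}\big(\frac{p+3}{2}g\big)^{r_3}$.
   Context: A sequence over $G$ is a finite unordered list of elements of $G$ with repetition allowed, written multiplicatively; $h^r$ denotes $r$ copies of $h$ and $tg$ is the $t$-fold multiple of $g$. $|S|$ is the length, $\sigma(S)$ the sum of terms, and $\operatorname{supp}(S)$ the set of distinct elements occurring. $S$ is a minimal zero-sum sequence if $\sigma(S)=0$ and no subsequence $U$ with $1\le|U|<|S|$ has $\sigma(U)=0$. A minimal zero-sum sequence $S$ is unsplittable if there do not exist $h\in\operatorname{supp}(S)$ and $y,z\in G$ with $y+z=h$ such that the sequence obtained from $S$ by replacing one copy of $h$ with the two terms $y,z$ is again a minimal zero-sum sequence. *)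

From mathcomp Require Import all_boot all_order all_algebra.
Set Implicit Arguments. Unset Strict Implicit. Unset Printing Implicit Defensive.
Import GRing.Theory.
Local Open Scope ring_scope.

(* A sequence over an additive abelian group G is modelled as a list [seq G];
   order is irrelevant (all notions below are invariant under perm_eq). *)

Definition sigma (G : zmodType) (S : seq G) : G := \sum_(x <- S) x.

Definition minimal_zero_sum (G : zmodType) (S : seq G) : Prop :=
  S <> [::] /\ sigma S = 0 /\
  forall U : seq G, subseq U S -> (0 < size U)%N -> (size U < size S)%N ->
    sigma U <> 0.

Definition unsplittable (G : zmodType) (S : seq G) : Prop :=
  minimal_zero_sum S /\
  ~ (exists h y z : G, h \in S /\ y + z = h /\
       minimal_zero_sum (y :: z :: rem h S)).

Definition add_cyclic (G : zmodType) : Prop :=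
  exists g0 : G, forall x : G, exists k : nat, x = g0 *+ k.

(* Only minimality is needed: the sum of such an S is g times
   N = r1 + n r2 + (n + 2) r3, where p = 2n + 1 and n = r1 + r2 + r3, and
   2N = p (r2 + r3 + 1) - (3 r2 - r3 + 1) with 0 < 3 r2 - r3 + 1 < p, so
   p does not divide N.  As g lies in S it is nonzero, hence of order p, and
   sigma S = g N is nonzero, contradicting sigma S = 0. *)
From mathcomp Require Import all_boot all_order all_algebra all_fingroup.
From mathcomp Require Import cyclic zify.
Set Implicit Arguments. Unset Strict Implicit. Unset Printing Implicit Defensive.
Import GRing.Theory.
Local Open Scope ring_scope.

Lemma sigma_nseq (G : zmodType) (n : nat) (x : G) : sigma (nseq n x) = x *+ n.
Proof.
by rewrite /sigma; elim: n => [|n IH]; rewrite ?big_nil // big_cons IH mulrS.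
Qed.

Lemma sigma_cat (G : zmodType) (s t : seq G) :
  sigma (s ++ t) = sigma s + sigma t.
Proof. by rewrite /sigma big_cat. Qed.

Lemma minimal_zero_sum_notin0 (G : zmodType) (S : seq G) :
  minimal_zero_sum S -> (1 < size S)%N -> 0 \notin S.
Proof.
move=> [_ [_ minS]] szS; apply/negP => S0.
apply: (minS [:: 0]) => //; first by rewrite sub1seq.
by rewrite /sigma big_seq1.
Qed.

Lemma mulrn_eq0_prime_card (G : finZmodType) (p N : nat) (g : G) :
  prime p -> #|[set: G]| = p -> g != 0 -> g *+ N = 0 -> (p %| N)%N.
Proof.
move=> p_pr cardG g_neq0 gN0.
have /(primeP p_pr).2 : (#[g]%g %| p)%N by rewrite -cardG order_dvdG ?in_setT.
rewrite order_eq1 (negbTE g_neq0) /= => /eqP <-.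
by rewrite order_dvdn FinRing.zmodXgE gN0.
Qed.

Lemma odd_halfE (p : nat) : odd p ->
  p = (p.-1./2).*2.+1 /\ (p + 3)./2 = (p.-1./2 + 2)%N.
Proof.
case: p => // q; rewrite [odd _]/= => /negbTE oq.
have q2 : q = (q./2).*2 by rewrite -[q in LHS]odd_double_half oq.
split; first by rewrite -q2.
by rewrite (_ : q.+1 + 3 = (q./2 + 2).*2)%N ?doubleK //; lia.
Qed.

Lemma not_dvdn_weighted_sum (n r1 r2 r3 : nat) :
  (r2 <= r1)%N -> (r3 <= r2)%N -> (0 < r3)%N -> (r1 + r2 + r3)%N = n ->
  ~~ (n.*2.+1 %| r1 + n * r2 + (n + 2) * r3)%N.
Proof.
move=> r21 r32 r3_gt0 def_n; apply/negP => dvdN.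
set N := (r1 + n * r2 + (n + 2) * r3)%N in dvdN.
have defN2 : (n.*2.+1 * (r2 + r3 + 1) = N.*2 + (3 * r2 - r3 + 1))%N.
  by rewrite /N; nia.
have : (n.*2.+1 %| 3 * r2 - r3 + 1)%N.
  by rewrite -(dvdn_addr _ (dvdn_mull 2 dvdN)) mul2n -defN2 dvdn_mulr.
by move/dvdn_leq; rewrite addn1 => /(_ isT); lia.
Qed.

Theorem lemma3p4 (p : nat) (G : finZmodType) (S : seq G) :
  prime p -> (155 < p)%N -> #|[set: G]| = p -> add_cyclic G ->
  unsplittable S -> size S = p.-1./2 ->
  ~ (exists (g : G) (r1 r2 r3 : nat),
        [/\ (r2 <= r1)%N, (r3 <= r2)%N, (0 < r3)%N &
            perm_eq S (nseq r1 g ++ nseq r2 (g *+ p.-1./2)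
                                 ++ nseq r3 (g *+ (p + 3)./2))]).
Proof.
move=> p_pr p_gt155 cardG _ [minS _] szS [g [r1 [r2 [r3 [r21 r32 r3_gt0 defS]]]]].
have p_odd : odd p by case: (even_prime p_pr) => // p2; rewrite p2 in p_gt155.
have [def_p def_p3] := (odd_halfE p_odd).
set n := p.-1./2 in szS defS def_p def_p3; rewrite def_p3 in defS.
have def_n : (r1 + r2 + r3)%N = n.
  by move: (perm_size defS); rewrite !size_cat !size_nseq szS addnA.
have g_in_S : g \in S.
  by rewrite (perm_mem defS) mem_cat mem_nseq eqxx andbT; apply/orP; left; lia.
have size_S_gt1 : (1 < size S)%N by rewrite szS -def_n; lia.
have g_neq0 : g != 0.
  by apply: contraTneq g_in_S => ->; exact: minimal_zero_sum_notin0.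
have sigmaS : g *+ (r1 + n * r2 + (n + 2) * r3) = 0.
  case: minS => _ [<- _]; rewrite /sigma (perm_big _ defS) -/(sigma _).
  by rewrite !sigma_cat !sigma_nseq -!mulrnA !mulrnDr addrA.
have := mulrn_eq0_prime_card p_pr cardG g_neq0 sigmaS.
by rewrite def_p; apply/negP/not_dvdn_weighted_sum.
Qed.
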